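(* Let $a,b\in\mathcal{A}$ be distinct with $p_a>0$ and $p_b>0$, and let $S$ be a scoring function. Assume there exist constants $\Delta>0$ and $\alpha>0$ such that for all $n$ large enough $$P\left(E[\tilde{L}_n(S)-L_n(S)\mid X,Y]\geq\Delta\right)\geq 1-n^{-\alpha\ln(n)}.$$ Then $\mathrm{VAR}[L_n(S)]=\Theta(n)$, i.e. there are constants $0<c\le C$ with $cn\le \mathrm{VAR}[L_n(S)]\le Cn$ for all $n$ large enough.
   Context: Let $\mathcal{A}$ be a finite alphabet and $\mathcal{A}^*=\mathcal{A}\cup\{G\}$, where $G$ is a gap symbol. A scoring function is a symmetric map $S:\mathcal{A}^*\times\mathcal{A}^*\to\mathbb{R}$. For strings $x=x_1\dots x_m$, $y=y_1\dots y_{m'}$ over $\mathcal{A}$, an alignment $\pi$ is a sequence $((\mu_1,\nu_1),\dots,(\mu_k,\nu_k))$, $k\ge0$, with $1\le\mu_1<\dots<\mu_k\le m$ and $1\le\nu_1<\dots<\nu_k\le m'$; its score is $S_\pi(x,y)=\sum_{i=1}^k S(x_{\mu_i},y_{\nu_i})+\sum_{j\notin\{\mu_i\}}S(x_j,G)+\sum_{j\notin\{\nu_i\}}S(G,y_j)$, and $L_S(x,y)=\max_\pi S_\pi(x,y)$. Let $X=X_1\dots X_n$, $Y=Y_1\dots Y_n$ where all $2n$ letters are i.i.d. with $P(X_i=c)=P(Y_j=c)=p_c$. Put $L_n(S)=L_S(X,Y)$. For fixed distinct $a,b$, let $N_a$ be the total number of occurrences of $a$ in $X$ and $Y$ combined;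 if $N_a\ge1$, choose one of these occurrences uniformly at random and replace it by $b$, giving $(\tilde X,\tilde Y)$ (if $N_a=0$ set $(\tilde X,\tilde Y)=(X,Y)$), and let $\tilde L_n(S)=L_S(\tilde X,\tilde Y)$. *)

From Stdlib Require Import Reals Lra Lia Arith List.
Import ListNotations.
Open Scope R_scope.

(* Conventions.
   - The finite alphabet A is {0, ..., K-1} (letters are nat < K).
   - A* = A ∪ {G}: a letter of A* is an [option nat], [None] being the gap G.
   - Strings are [list nat]; positions are 1-based as in the paper. *)

Definition sumR (l : list R) : R := fold_right Rplus 0 l.

Fixpoint words (K n : nat) : list (list nat) :=
  match n with
  | O => [[]]
  | S n' => flat_map (fun c => map (cons c) (words K n')) (seq 0 K)
  end.

Definition weight (p : nat -> R) (w : list nat) : R :=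
  fold_right (fun c r => p c * r) 1 w.

Fixpoint sublists (l : list nat) : list (list nat) :=
  match l with
  | [] => [[]]
  | x :: t => map (cons x) (sublists t) ++ sublists t
  end.

(* All alignments between strings of lengths m and m': sequences
   ((mu_1,nu_1),...,(mu_k,nu_k)) with 1 <= mu_1 < ... < mu_k <= m and
   1 <= nu_1 < ... < nu_k <= m'. *)
Definition alignments (m m' : nat) : list (list (nat * nat)) :=
  flat_map (fun mu =>
     map (fun nu => combine mu nu)
         (filter (fun nu => Nat.eqb (length nu) (length mu)) (sublists (seq 1 m'))))
    (sublists (seq 1 m)).

Definition memb (j : nat) (l : list nat) : bool := existsb (Nat.eqb j) l.

Definition letter (x : list nat) (j : nat) : nat := nth (j - 1) x 0%nat.

Definition align_score (S : option nat -> option nat -> R)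
    (x y : list nat) (pi : list (nat * nat)) : R :=
  sumR (map (fun ij => S (Some (letter x (fst ij))) (Some (letter y (snd ij)))) pi)
  + sumR (map (fun j => if memb j (map fst pi) then 0 else S (Some (letter x j)) None)
              (seq 1 (length x)))
  + sumR (map (fun j => if memb j (map snd pi) then 0 else S None (Some (letter y j)))
              (seq 1 (length y))).

(* L_S(x,y) = max over all alignments (the empty alignment is always one). *)
Definition LS (S : option nat -> option nat -> R) (x y : list nat) : R :=
  fold_right (fun pi r => Rmax (align_score S x y pi) r)
             (align_score S x y [])
             (alignments (length x) (length y)).

Fixpoint replace_occ (a b k : nat) (w : list nat) : list nat :=
  match w with
  | [] => []
  | c :: t =>
      if Nat.eqb c a then
        match k with
        | O => b :: t
        | S k' => c :: replace_occ a b k' t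
        end
      else c :: replace_occ a b k t
  end.

Definition count_a (a : nat) (x y : list nat) : nat :=
  length (filter (Nat.eqb a) (x ++ y)).

(* E[ tilde L_n(S) - L_n(S) | X = x, Y = y ]: the replaced occurrence is
   uniform among the N_a occurrences of a in x y (difference 0 if N_a = 0). *)
Definition cond_gain (S : option nat -> option nat -> R) (a b : nat)
    (x y : list nat) : R :=
  let N := count_a a x y in
  match N with
  | O => 0
  | _ =>
    sumR (map (fun k =>
            let w := replace_occ a b k (x ++ y) in
            LS S (firstn (length x) w) (skipn (length x) w) - LS S x y)
          (seq 0 N)) / INR N
  end.

Definition Exp (K : nat) (p : nat -> R) (n : nat) (f : list nat -> list nat -> R) : R :=
  sumR (flat_map (fun x => map (fun y => weight p x * weight p y * f x y)
                               (words K n)) (words K n)).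


Definition prob_gain_ge (K : nat) (p : nat -> R) (S : option nat -> option nat -> R)
    (a b n : nat) (Delta : R) : R :=
  Exp K p n (fun x y => if Rle_dec Delta (cond_gain S a b x y) then 1 else 0).

Definition var_L (K : nat) (p : nat -> R) (S : option nat -> option nat -> R) (n : nat) : R :=
  let m := Exp K p n (fun x y => LS S x y) in
  Exp K p n (fun x y => (LS S x y - m) ^ 2).

Definition valid_letter (K : nat) (u : option nat) : Prop :=
  match u with None => True | Some c => (c < K)%nat end.

(* Both random words are read as one word w of length N = 2n with i.i.d.
   letters; L(w) is the alignment score of its two halves, and all
   expectations are finite weighted sums over words ([Ew]).

   A function of N i.i.d. letters that changes by at most d
   when one letter changes has variance at most N d^2 (an Efron-Stein type
   bound, proved by conditioning on the first letter).  Changing one letter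
   changes the alignment score by at most 4 max|S|.

   Let N_a, N_b count the letters a, b in w and put
   D = N_a - (p_a/p_b) N_b, so E[D] = 0 and E[D^2] <= N (1 + p_a/p_b)^2.
   Replacing the k-th a by b and averaging gives the exchange identity
   E[sum_k L(w with its k-th a replaced by b)] = (p_a/p_b) E[N_b L], hence
   Cov(D, L) = - E[N_a G] where G = E[tilde L - L | X, Y].  The hypothesis
   makes G >= Delta outside a set of probability n^(-alpha ln n) -> 0, so
   E[N_a G] >= N p_a Delta / 2 for large n, and expanding
   0 <= E[(L - E L + t D)^2] with a suitable constant t yields VAR L >= c n. *)

From Stdlib Require Import Reals Lra Lia List ZArith.
Import ListNotations.
Open Scope R_scope.

Lemma sumR_app l1 l2 : sumR (l1 ++ l2) = sumR l1 + sumR l2.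
Proof. induction l1 as [|x l1 IH]; simpl; [lra|]. rewrite IH; lra. Qed.

Lemma sumR_concat {A} (g : A -> list R) l :
  sumR (flat_map g l) = sumR (map (fun z => sumR (g z)) l).
Proof. induction l as [|z l IH]; simpl; auto. rewrite sumR_app, IH; auto. Qed.

Lemma sumR_flat_map {A B} (g : A -> list B) (h : B -> R) l :
  sumR (map h (flat_map g l)) = sumR (map (fun z => sumR (map h (g z))) l).
Proof. induction l as [|z l IH]; simpl; auto. rewrite map_app, sumR_app, IH; auto. Qed.

Lemma sumR_scal {A} (h : A -> R) c l :
  sumR (map (fun z => c * h z) l) = c * sumR (map h l).
Proof. induction l as [|z l IH]; simpl; [lra|]. rewrite IH; lra. Qed.

Lemma sumR_plus {A} (f g : A -> R) l :
  sumR (map (fun z => f z + g z) l) = sumR (map f l) + sumR (map g l).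
Proof. induction l as [|z l IH]; simpl; [lra|]. rewrite IH; lra. Qed.

Lemma sumR_minus {A} (f g : A -> R) l :
  sumR (map (fun z => f z - g z) l) = sumR (map f l) - sumR (map g l).
Proof. induction l as [|z l IH]; simpl; [lra|]. rewrite IH; lra. Qed.

Lemma sumR_const {A} c (l : list A) : sumR (map (fun _ => c) l) = INR (length l) * c.
Proof.
  induction l as [|z l IH]; simpl length; [simpl; lra|].
  rewrite S_INR; simpl; rewrite IH; lra.
Qed.

Lemma sumR_ext {A} (f g : A -> R) l :
  (forall z, In z l -> f z = g z) -> sumR (map f l) = sumR (map g l).
Proof. intros H; f_equal; apply map_ext_in; auto. Qed.

Lemma sumR_mono {A} (f g : A -> R) l :
  (forall z, In z l -> f z <= g z) -> sumR (map f l) <= sumR (map g l).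
Proof.
  induction l as [|z l IH]; simpl; intros H; [lra|].
  pose proof (H z (or_introl eq_refl)); pose proof (IH (fun y h => H y (or_intror h))); lra.
Qed.

Lemma sumR_nonneg {A} (f : A -> R) l :
  (forall z, In z l -> 0 <= f z) -> 0 <= sumR (map f l).
Proof.
  intros H; rewrite <- (Rmult_0_r (INR (length l))), <- sumR_const.
  apply sumR_mono; auto.
Qed.

Lemma sumR_ge_term {A} (f : A -> R) l z :
  (forall z, In z l -> 0 <= f z) -> In z l -> f z <= sumR (map f l).
Proof.
  induction l as [|y l IH]; simpl; intros H Hz; [contradiction|].
  assert (0 <= sumR (map f l)) by (apply sumR_nonneg; auto).
  destruct Hz as [<-|Hz]; [lra|].
  pose proof (H y (or_introl eq_refl)); pose proof (IH (fun x h => H x (or_intror h)) Hz); lra.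
Qed.

Lemma sumR_indicator l a (v : nat -> R) :
  NoDup l -> In a l -> sumR (map (fun c => if Nat.eqb c a then v c else 0) l) = v a.
Proof.
  induction l as [|x l IH]; simpl; intros Hn Hin; [contradiction|].
  inversion Hn as [|? ? Hx Hl]; subst.
  destruct (Nat.eqb_spec x a) as [->|Hxa].
  - rewrite (sumR_ext _ (fun _ => 0)), sumR_const; [lra|].
    intros z Hz; destruct (Nat.eqb_spec z a); subst; [contradiction|auto].
  - destruct Hin as [->|Hin]; [congruence|]. rewrite IH; auto; lra.
Qed.

Definition wsum {A} (l : list A) (w : A -> R) (f : A -> R) : R :=
  sumR (map (fun z => w z * f z) l).

Section WeightedSums.
Context {A : Type} (l : list A) (w : A -> R).

Lemma wsum_plus f g : wsum l w (fun z => f z + g z) = wsum l w f + wsum l w g.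
Proof. unfold wsum; rewrite <- sumR_plus; apply sumR_ext; intros; lra. Qed.

Lemma wsum_minus f g : wsum l w (fun z => f z - g z) = wsum l w f - wsum l w g.
Proof. unfold wsum; rewrite <- sumR_minus; apply sumR_ext; intros; lra. Qed.

Lemma wsum_scal f c : wsum l w (fun z => c * f z) = c * wsum l w f.
Proof. unfold wsum; rewrite <- sumR_scal; apply sumR_ext; intros; lra. Qed.

Lemma wsum_ext f g : (forall z, In z l -> f z = g z) -> wsum l w f = wsum l w g.
Proof. intros H; apply sumR_ext; intros z Hz; rewrite H; auto. Qed.

Lemma wsum_mono f g : (forall z, In z l -> 0 <= w z) ->
  (forall z, In z l -> f z <= g z) -> wsum l w f <= wsum l w g.
Proof. intros Hw H; apply sumR_mono; intros z Hz; apply Rmult_le_compat_l; auto. Qed.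

Lemma wsum_const c : wsum l w (fun _ => c) = c * wsum l w (fun _ => 1).
Proof. rewrite <- wsum_scal; apply wsum_ext; intros; lra. Qed.

Lemma wsum_second_moment f t : wsum l w (fun _ => 1) = 1 ->
  wsum l w (fun z => (f z - t)^2)
  = wsum l w (fun z => (f z - wsum l w f)^2) + (wsum l w f - t)^2.
Proof.
  intros H1; set (M := wsum l w f).
  rewrite (wsum_ext _ (fun z => (f z - M)^2 + ((2*(M-t)) * f z + (-2*(M-t)*M + (M-t)^2))))
    by (intros; ring).
  rewrite wsum_plus, wsum_plus, wsum_scal, (wsum_const (_ + _)), H1; fold M; ring.
Qed.

End WeightedSums.

Definition Ew (K : nat) (p : nat -> R) (n : nat) (f : list nat -> R) : R :=
  wsum (words K n) (weight p) f.

Definition validw (K : nat) (w : list nat) : Prop := Forall (fun c => (c < K)%nat) w.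

Lemma words_spec K n w : In w (words K n) -> length w = n /\ validw K w.
Proof.
  revert w; induction n as [|n IH]; simpl; intros w H.
  - destruct H as [<-|[]]; split; [auto|constructor].
  - apply in_flat_map in H as [c [Hc H]]; apply in_map_iff in H as [w' [<- Hw']].
    apply IH in Hw' as [Hl Hv]; apply in_seq in Hc.
    split; simpl; [auto|constructor; [lia|auto]].
Qed.

Section WordExpectation.
Variables (K : nat) (p : nat -> R).
Hypothesis p_nonneg : forall c, (c < K)%nat -> 0 <= p c.
Hypothesis p_sum : sumR (map p (seq 0 K)) = 1.

Lemma weight_nonneg w : validw K w -> 0 <= weight p w.
Proof. intros H; induction H; simpl; [lra|]. apply Rmult_le_pos; auto. Qed.

Lemma Ew_0 f : Ew K p 0 f = f [].
Proof. unfold Ew, wsum; simpl; lra. Qed.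

Lemma Ew_S n f :
  Ew K p (S n) f = wsum (seq 0 K) p (fun c => Ew K p n (fun w => f (c :: w))).
Proof.
  unfold Ew, wsum; simpl words; rewrite sumR_flat_map.
  apply sumR_ext; intros c _; rewrite map_map, <- sumR_scal.
  apply sumR_ext; intros; simpl; lra.
Qed.

Lemma Ew_plus n f g : Ew K p n (fun z => f z + g z) = Ew K p n f + Ew K p n g.
Proof. apply wsum_plus. Qed.
Lemma Ew_minus n f g : Ew K p n (fun z => f z - g z) = Ew K p n f - Ew K p n g.
Proof. apply wsum_minus. Qed.
Lemma Ew_scal n f c : Ew K p n (fun z => c * f z) = c * Ew K p n f.
Proof. apply wsum_scal. Qed.

Lemma Ew_ext n f g :
  (forall w, validw K w -> length w = n -> f w = g w) -> Ew K p n f = Ew K p n g.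
Proof. intros H; apply wsum_ext; intros z Hz; destruct (words_spec K n z Hz); auto. Qed.

Lemma Ew_mono n f g :
  (forall w, validw K w -> length w = n -> f w <= g w) -> Ew K p n f <= Ew K p n g.
Proof.
  intros H; apply wsum_mono; intros z Hz; destruct (words_spec K n z Hz).
  - apply weight_nonneg; auto.
  - apply H; auto.
Qed.

Lemma wsum_letters_one : wsum (seq 0 K) p (fun _ => 1) = 1.
Proof. rewrite <- p_sum at 1; unfold wsum; apply sumR_ext; intros; lra. Qed.

Lemma Ew_one n : Ew K p n (fun _ => 1) = 1.
Proof.
  induction n as [|n IH]; [apply Ew_0|].
  rewrite Ew_S, (wsum_ext _ _ _ (fun _ => 1)); [apply wsum_letters_one|auto].
Qed.

Lemma Ew_const n c : Ew K p n (fun _ => c) = c.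
Proof. unfold Ew; rewrite wsum_const; fold (Ew K p n (fun _ => 1)); rewrite Ew_one; lra. Qed.

Lemma Ew_app n m G :
  Ew K p (n + m) G = Ew K p n (fun x => Ew K p m (fun y => G (x ++ y))).
Proof.
  revert G; induction n as [|n IH]; intros G; [rewrite Ew_0; reflexivity|].
  simpl (S n + m)%nat; rewrite !Ew_S; apply wsum_ext; intros c _; apply IH.
Qed.

End WordExpectation.

Lemma Exp_as_Ew K p n f :
  Exp K p n f = Ew K p (n + n) (fun w => f (firstn n w) (skipn n w)).
Proof.
  rewrite Ew_app; unfold Exp; rewrite sumR_concat.
  transitivity (Ew K p n (fun x => Ew K p n (fun y => f x y))).
  { unfold Ew, wsum; apply sumR_ext; intros x _; rewrite <- sumR_scal.
    apply sumR_ext; intros; lra. }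
  apply Ew_ext; intros x _ Hx; apply Ew_ext; intros y _ _.
  rewrite firstn_app, skipn_app, <- Hx, Nat.sub_diag, firstn_all, skipn_all; simpl.
  rewrite app_nil_r; reflexivity.
Qed.

(** * Variance of functions with bounded differences *)

Definition bounded_differences (K : nat) (F : list nat -> R) (d : R) : Prop :=
  forall w1 w2 c c', validw K w1 -> validw K w2 -> (c < K)%nat -> (c' < K)%nat ->
    Rabs (F (w1 ++ c :: w2) - F (w1 ++ c' :: w2)) <= d.

Lemma Rabs_le_iff x d : Rabs x <= d <-> -d <= x <= d.
Proof. split; [intros; split_Rabs; lra|apply Rabs_le]. Qed.

Section BoundedDifferences.
Variables (K : nat) (p : nat -> R).
Hypothesis p_nonneg : forall c, (c < K)%nat -> 0 <= p c.
Hypothesis p_sum : sumR (map p (seq 0 K)) = 1.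
Hypothesis K_pos : (0 < K)%nat.

Lemma wsum_letters_mono f g :
  (forall c, (c < K)%nat -> f c <= g c) -> wsum (seq 0 K) p f <= wsum (seq 0 K) p g.
Proof.
  intros H; apply wsum_mono; intros c Hc; apply in_seq in Hc;
    [apply p_nonneg|apply H]; lia.
Qed.

Lemma conditional_means_close n F d : bounded_differences K F d -> forall c c',
  (c < K)%nat -> (c' < K)%nat ->
  Rabs (Ew K p n (fun w => F (c :: w)) - Ew K p n (fun w => F (c' :: w))) <= d.
Proof.
  intros HB c c' Hc Hc'; rewrite <- Ew_minus, Rabs_le_iff.
  rewrite <- (Ew_const K p p_sum n d) at 2; rewrite <- (Ew_const K p p_sum n (-d)).
  split; apply Ew_mono; auto; intros w Hw _;
    pose proof (HB [] w c c' (Forall_nil _) Hw Hc Hc') as X; apply Rabs_le_iff in X;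
    simpl in X; lra.
Qed.

Lemma variance_bounded_differences : forall n F d, bounded_differences K F d ->
  Ew K p n (fun w => (F w - Ew K p n F)^2) <= INR n * d^2.
Proof.
  induction n as [|n IH]; intros F d HB.
  { rewrite !Ew_0; simpl; replace (F [] - F []) with 0 by ring; lra. }
  set (g := fun c => Ew K p n (fun w => F (c :: w))).
  set (M := wsum (seq 0 K) p g).
  assert (HM : Ew K p (S n) F = M) by (rewrite Ew_S; reflexivity).
  assert (Hone := wsum_letters_one K p p_sum).
  (* total variance = mean conditional variance + variance of conditional means *)
  rewrite HM, Ew_S, (wsum_ext _ _ _
    (fun c => Ew K p n (fun w => (F (c :: w) - g c)^2) + (g c - M)^2)).
  2:{ intros c _; unfold Ew; rewrite wsum_second_moment by (apply Ew_one; auto).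
      reflexivity. }
  rewrite wsum_plus.
  assert (Hcond : wsum (seq 0 K) p (fun c => Ew K p n (fun w => (F (c :: w) - g c)^2))
                  <= INR n * d^2).
  { rewrite <- (Rmult_1_r (INR n * d^2)), <- Hone, <- wsum_scal.
    apply wsum_letters_mono; intros c Hc; rewrite Rmult_1_r; apply IH.
    intros w1 w2 c1 c2 H1 H2 H3 H4; apply (HB (c :: w1)); auto; constructor; auto. }
  assert (Hmeans : wsum (seq 0 K) p (fun c => (g c - M)^2) <= d^2).
  { pose proof (wsum_second_moment (seq 0 K) p g (g 0%nat) Hone) as V; fold M in V.
    assert (wsum (seq 0 K) p (fun c => (g c - g 0%nat)^2) <= d^2).
    { rewrite <- (Rmult_1_r (d^2)), <- Hone, <- wsum_scal.
      apply wsum_letters_mono; intros c Hc; rewrite Rmult_1_r.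
      pose proof (conditional_means_close n F d HB c 0 Hc K_pos) as X.
      apply Rabs_le_iff in X; fold (g c) (g 0%nat) in X; nra. }
    pose proof (pow2_ge_0 (M - g 0%nat)); lra. }
  rewrite S_INR; lra.
Qed.

End BoundedDifferences.

(** * Letter counts and the exchange identity *)

Definition cnt (a : nat) (w : list nat) : nat := length (filter (Nat.eqb a) w).

Lemma cnt_cons a c w : cnt a (c :: w) = if Nat.eqb a c then S (cnt a w) else cnt a w.
Proof. unfold cnt; simpl; destruct (Nat.eqb a c); reflexivity. Qed.

Lemma cnt_cons_R a c w :
  INR (cnt a (c :: w)) = (if Nat.eqb c a then 1 else 0) + INR (cnt a w).
Proof.
  rewrite cnt_cons, Nat.eqb_sym; destruct (Nat.eqb c a); [rewrite S_INR|]; lra.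
Qed.

Lemma cnt_app a w1 w2 : INR (cnt a (w1 ++ w2)) = INR (cnt a w1) + INR (cnt a w2).
Proof. unfold cnt; rewrite filter_app, length_app, plus_INR; reflexivity. Qed.

Lemma cnt_le a w : (cnt a w <= length w)%nat.
Proof. apply filter_length_le. Qed.

Lemma replace_occ_split a b : forall w k, (k < cnt a w)%nat ->
  exists w1 w2, w = w1 ++ a :: w2 /\ replace_occ a b k w = w1 ++ b :: w2.
Proof.
  induction w as [|c w IH]; intros k Hk; [unfold cnt in Hk; simpl in Hk; lia|].
  rewrite cnt_cons in Hk; simpl replace_occ.
  destruct (Nat.eqb_spec c a) as [->|Hca].
  - rewrite Nat.eqb_refl in Hk; destruct k as [|k]; [exists [], w; auto|].
    destruct (IH k) as [w1 [w2 [E1 E2]]]; [lia|].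
    exists (a :: w1), w2; rewrite E2, E1; auto.
  - destruct (Nat.eqb_spec a c); [congruence|].
    destruct (IH k Hk) as [w1 [w2 [E1 E2]]]; exists (c :: w1), w2; rewrite E2, E1; auto.
Qed.

Lemma replace_sum_cons a b c w (F : list nat -> R) :
  sumR (map (fun k => F (replace_occ a b k (c :: w))) (seq 0 (cnt a (c :: w)))) =
  (if Nat.eqb c a then F (b :: w) else 0) +
  sumR (map (fun k => F (c :: replace_occ a b k w)) (seq 0 (cnt a w))).
Proof.
  rewrite cnt_cons; destruct (Nat.eqb_spec c a) as [->|Hca].
  - rewrite Nat.eqb_refl; simpl seq; rewrite <- seq_shift; simpl; rewrite Nat.eqb_refl.
    rewrite map_map; reflexivity.
  - destruct (Nat.eqb_spec a c); [congruence|].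
    simpl replace_occ; rewrite (proj2 (Nat.eqb_neq c a) Hca); lra.
Qed.

Section Counts.
Variables (K : nat) (p : nat -> R).
Hypothesis p_sum : sumR (map p (seq 0 K)) = 1.

Lemma wsum_letters_indicator x (X : R) : (x < K)%nat ->
  wsum (seq 0 K) p (fun c => if Nat.eqb c x then X else 0) = p x * X.
Proof.
  intros Hx; unfold wsum.
  rewrite (sumR_ext _ (fun c => if Nat.eqb c x then p c * X else 0))
    by (intros c _; destruct (Nat.eqb c x); lra).
  apply (sumR_indicator _ _ (fun c => p c * X)); [apply seq_NoDup|apply in_seq; lia].
Qed.

Lemma Ew_count_cons x m c F : Ew K p m (fun w => INR (cnt x (c :: w)) * F (c :: w)) =
  (if Nat.eqb c x then Ew K p m (fun w => F (x :: w)) else 0)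
  + Ew K p m (fun w => INR (cnt x w) * F (c :: w)).
Proof.
  destruct (Nat.eqb_spec c x) as [->|Hcx].
  - rewrite <- Ew_plus; apply Ew_ext; intros w _ _.
    rewrite cnt_cons_R, Nat.eqb_refl; ring.
  - rewrite <- (Ew_const K p p_sum m 0), <- Ew_plus; apply Ew_ext; intros w _ _.
    rewrite cnt_cons_R, (proj2 (Nat.eqb_neq c x) Hcx); ring.
Qed.

Lemma Ew_count a m : (a < K)%nat -> Ew K p m (fun w => INR (cnt a w)) = INR m * p a.
Proof.
  intros a_letter.
  induction m as [|m IH]; [rewrite Ew_0; unfold cnt; simpl; lra|].
  rewrite Ew_S, (wsum_ext _ _ _ (fun c => (if Nat.eqb c a then 1 else 0) + INR m * p a)).
  - rewrite wsum_plus, wsum_letters_indicator, wsum_const, wsum_letters_one by auto.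
    rewrite S_INR; lra.
  - intros c _; rewrite <- IH.
    rewrite (Ew_ext K p m _ (fun w => INR (cnt a (c :: w)) * 1)) by (intros; ring).
    rewrite (Ew_count_cons a m c (fun _ => 1)).
    rewrite (Ew_ext K p m (fun w => INR (cnt a w) * 1) (fun w => INR (cnt a w)))
      by (intros; ring).
    destruct (Nat.eqb c a); [rewrite Ew_const|]; auto.
Qed.

Variables (a b : nat).
Hypotheses (a_letter : (a < K)%nat) (b_letter : (b < K)%nat) (pb_pos : 0 < p b).

Lemma Ew_replace_exchange : forall m F,
  Ew K p m (fun w => sumR (map (fun k => F (replace_occ a b k w)) (seq 0 (cnt a w))))
  = (p a / p b) * Ew K p m (fun w => INR (cnt b w) * F w).
Proof.
  induction m as [|m IH]; intros F; [rewrite !Ew_0; unfold cnt; simpl; lra|].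
  rewrite !Ew_S.
  rewrite (wsum_ext _ _ _ (fun c => (if Nat.eqb c a then Ew K p m (fun w => F (b :: w)) else 0)
        + (p a / p b) * Ew K p m (fun w => INR (cnt b w) * F (c :: w)))).
  2:{ intros c _.
      rewrite (Ew_ext K p m _ (fun w => (if Nat.eqb c a then F (b :: w) else 0) +
          sumR (map (fun k => F (c :: replace_occ a b k w)) (seq 0 (cnt a w)))))
        by (intros; apply replace_sum_cons).
      rewrite Ew_plus, (IH (fun w => F (c :: w))).
      destruct (Nat.eqb c a); [|rewrite Ew_const]; auto. }
  rewrite (wsum_ext _ _ (fun c => Ew K p m (fun w => INR (cnt b (c :: w)) * F (c :: w)))
    (fun c => (if Nat.eqb c b then Ew K p m (fun w => F (b :: w)) else 0)
              + Ew K p m (fun w => INR (cnt b w) * F (c :: w))))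
    by (intros c _; apply Ew_count_cons).
  rewrite !wsum_plus, !wsum_letters_indicator, !wsum_scal by auto.
  field; lra.
Qed.

End Counts.

(** * The alignment score has bounded differences *)

Definition letters_star (K : nat) : list (option nat) := None :: map Some (seq 0 K).

Definition Smax (K : nat) (S : option nat -> option nat -> R) : R :=
  sumR (map (fun u => sumR (map (fun v => Rabs (S u v)) (letters_star K))) (letters_star K)).

Lemma letters_star_complete K u : valid_letter K u -> In u (letters_star K).
Proof.
  destruct u as [c|]; simpl; intros H; [right|left; auto].
  apply in_map, in_seq; lia.
Qed.

Lemma Smax_nonneg K S : 0 <= Smax K S.
Proof. apply sumR_nonneg; intros; apply sumR_nonneg; intros; apply Rabs_pos. Qed.

Lemma S_bound K S u v : valid_letter K u -> valid_letter K v -> Rabs (S u v) <= Smax K S.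
Proof.
  intros Hu Hv; unfold Smax.
  eapply Rle_trans;
    [|apply (sumR_ge_term (fun u => sumR (map (fun v => Rabs (S u v)) (letters_star K))))].
  - apply (sumR_ge_term (fun v => Rabs (S u v))); [intros; apply Rabs_pos|].
    apply letters_star_complete; auto.
  - intros; apply sumR_nonneg; intros; apply Rabs_pos.
  - apply letters_star_complete; auto.
Qed.

Lemma S_diff_bound K S u v u' v' : valid_letter K u -> valid_letter K v ->
  valid_letter K u' -> valid_letter K v' -> Rabs (S u v - S u' v') <= 2 * Smax K S.
Proof.
  intros; assert (Rabs (S u v) <= Smax K S) by (apply S_bound; auto).
  assert (Rabs (S u' v') <= Smax K S) by (apply S_bound; auto).
  eapply Rle_trans; [apply Rabs_triang|]; rewrite Rabs_Ropp; lra.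
Qed.

(* Letters read from a valid word (past its end: the default 0) are valid. *)
Lemma letter_valid K x i : (0 < K)%nat -> validw K x -> (letter x i < K)%nat.
Proof.
  intros HK Hx; unfold letter; destruct (Nat.lt_ge_cases (i - 1) (length x)).
  - unfold validw in Hx; rewrite Forall_forall in Hx; apply Hx, nth_In; auto.
  - rewrite nth_overflow; auto.
Qed.

Lemma letter_change u1 u2 c c' i : (i - 1 <> length u1)%nat ->
  letter (u1 ++ c :: u2) i = letter (u1 ++ c' :: u2) i.
Proof.
  intros H; unfold letter; destruct (Nat.lt_ge_cases (i - 1) (length u1)).
  - rewrite !app_nth1; auto.
  - rewrite !app_nth2 by auto; destruct (i - 1 - length u1)%nat eqn:E; [lia|reflexivity].
Qed.

Lemma length_change (u1 u2 : list nat) c c' : length (u1 ++ c :: u2) = length (u1 ++ c' :: u2).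
Proof. rewrite !length_app; reflexivity. Qed.

Lemma sum_single_change {A} (g : A -> nat) (l : list A) P (h h' : A -> R) d : 0 <= d ->
  NoDup (map g l) -> (forall z, g z <> P -> h z = h' z) ->
  (forall z, In z l -> Rabs (h z - h' z) <= d) ->
  Rabs (sumR (map h l) - sumR (map h' l)) <= d.
Proof.
  intros Hd; induction l as [|z l IH]; simpl; intros Hn He Hb.
  { replace (0 - 0) with 0 by ring; rewrite Rabs_R0; auto. }
  inversion Hn as [|? ? Hz Hl]; subst; destruct (Nat.eq_dec (g z) P) as [Ez|Nz].
  - assert (Hrest : sumR (map h l) = sumR (map h' l)).
    { apply sumR_ext; intros z' Hz' ; apply He; intros E; apply Hz.
      rewrite Ez, <- E; apply in_map; auto. }
    rewrite Hrest; replace (h z + sumR (map h' l) - (h' z + sumR (map h' l)))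
      with (h z - h' z) by ring; apply Hb; left; auto.
  - rewrite He by auto.
    replace (h' z + sumR (map h l) - (h' z + sumR (map h' l)))
      with (sumR (map h l) - sumR (map h' l)) by ring; apply IH; auto.
Qed.

Lemma NoDup_map_inj_in {A B} (f : A -> B) l : NoDup l ->
  (forall x y, In x l -> In y l -> f x = f y -> x = y) -> NoDup (map f l).
Proof.
  induction l as [|z l IH]; simpl; intros Hn Hi; constructor; inversion Hn; subst.
  - intros Hin; apply in_map_iff in Hin as [y [E Hy]].
    assert (y = z) by (apply Hi; auto); subst; contradiction.
  - apply IH; auto.
Qed.

Lemma sublists_spec l s : In s (sublists l) -> incl s l /\ (NoDup l -> NoDup s).
Proof.
  revert s; induction l as [|x l IH]; simpl; intros s H.
  { destruct H as [<-|[]]; split; [intros y []|constructor]. }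
  apply in_app_or in H as [H|H].
  - apply in_map_iff in H as [s' [<- Hs']]; destruct (IH s' Hs') as [I N].
    split; [intros y [<-|Hy]; [left|right; apply I]; auto|].
    intros Hn; inversion Hn; subst; constructor; auto.
  - destruct (IH s H) as [I N]; split; [intros y Hy; right; apply I; auto|].
    intros Hn; inversion Hn; subst; auto.
Qed.

Lemma combine_projections (mu nu : list nat) : length mu = length nu ->
  map fst (combine mu nu) = mu /\ map snd (combine mu nu) = nu.
Proof.
  revert nu; induction mu as [|x mu IH]; destruct nu; simpl; intros H; try discriminate; auto.
  destruct (IH nu) as [A B]; [lia|]; rewrite A, B; auto.
Qed.

Lemma positions_nodup (l : list nat) m : incl l (seq 1 m) -> NoDup l ->
  NoDup (map (fun j => j - 1)%nat l).
Proof.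
  intros I N; apply NoDup_map_inj_in; auto; intros x y Hx Hy E.
  apply I, in_seq in Hx; apply I, in_seq in Hy; lia.
Qed.

Lemma alignment_positions_nodup m m' pi : In pi (alignments m m') ->
  NoDup (map (fun ij => fst ij - 1)%nat pi) /\ NoDup (map (fun ij => snd ij - 1)%nat pi).
Proof.
  unfold alignments; intros H; apply in_flat_map in H as [mu [Hmu H]].
  apply in_map_iff in H as [nu [<- Hnu]]; apply filter_In in Hnu as [Hnu E].
  apply Nat.eqb_eq in E; destruct (combine_projections mu nu) as [F1 F2]; [lia|].
  destruct (sublists_spec _ _ Hmu) as [I1 N1]; destruct (sublists_spec _ _ Hnu) as [I2 N2].
  split.
  - rewrite <- (map_map fst (fun j => j - 1)%nat), F1.
    eapply positions_nodup; eauto; apply N1, seq_NoDup.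
  - rewrite <- (map_map snd (fun j => j - 1)%nat), F2.
    eapply positions_nodup; eauto; apply N2, seq_NoDup.
Qed.

Lemma all_positions_nodup n : NoDup (map (fun j => j - 1)%nat (seq 1 n)).
Proof. eapply positions_nodup; [apply incl_refl|apply seq_NoDup]. Qed.

Section OneLetterChange.
Variables (K : nat) (u1 u2 : list nat) (c c' : nat).
Hypotheses (K_pos : (0 < K)%nat) (u1_valid : validw K u1) (u2_valid : validw K u2).
Hypotheses (c_letter : (c < K)%nat) (c'_letter : (c' < K)%nat).

Lemma letter_sum_change {A} (l : list A) (pos : A -> nat) (Phi : A -> nat -> R) d :
  0 <= d -> NoDup (map (fun z => pos z - 1)%nat l) ->
  (forall z e e', (e < K)%nat -> (e' < K)%nat -> Rabs (Phi z e - Phi z e') <= d) ->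
  Rabs (sumR (map (fun z => Phi z (letter (u1 ++ c :: u2) (pos z))) l)
      - sumR (map (fun z => Phi z (letter (u1 ++ c' :: u2) (pos z))) l)) <= d.
Proof.
  intros Hd Hn HPhi.
  assert (V : validw K (u1 ++ c :: u2) /\ validw K (u1 ++ c' :: u2))
    by (split; apply Forall_app; split; auto).
  apply (sum_single_change (fun z => pos z - 1)%nat _ (length u1)); auto.
  - intros z Hz; rewrite (letter_change u1 u2 c c'); auto.
  - intros z _; apply HPhi; apply letter_valid; tauto.
Qed.

End OneLetterChange.

Section ScoreChange.
Variables (K : nat) (S : option nat -> option nat -> R).
Hypothesis K_pos : (0 < K)%nat.

Lemma gap_term_change (used : list nat) (T : option nat -> R) :
  (forall u, valid_letter K u -> Rabs (T u) <= Smax K S) ->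
  forall j e e', (e < K)%nat -> (e' < K)%nat ->
  Rabs ((if memb j used then 0 else T (Some e)) - (if memb j used then 0 else T (Some e')))
    <= 2 * Smax K S.
Proof.
  intros HT j e e' He He'; pose proof (Smax_nonneg K S).
  destruct (memb j used).
  - replace (0 - 0) with 0 by ring; rewrite Rabs_R0; lra.
  - assert (Rabs (T (Some e)) <= Smax K S) by (apply HT; exact He).
    assert (Rabs (T (Some e')) <= Smax K S) by (apply HT; exact He').
    eapply Rle_trans; [apply Rabs_triang|]; rewrite Rabs_Ropp; lra.
Qed.

Variables (u1 u2 : list nat) (c c' : nat).
Hypotheses (u1_valid : validw K u1) (u2_valid : validw K u2).
Hypotheses (c_letter : (c < K)%nat) (c'_letter : (c' < K)%nat).

(* Changing one letter of x changes the score of a fixed alignment by at most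
   4 max|S|: 2 max|S| on the aligned pairs, 2 max|S| on the gaps of x. *)
Lemma align_score_change_x y pi : validw K y ->
  NoDup (map (fun ij => fst ij - 1)%nat pi) ->
  Rabs (align_score S (u1 ++ c :: u2) y pi - align_score S (u1 ++ c' :: u2) y pi)
    <= 4 * Smax K S.
Proof.
  intros Hy Hn; pose proof (Smax_nonneg K S); unfold align_score.
  rewrite (length_change u1 u2 c' c).
  match goal with |- Rabs (?P + ?G + ?H - (?P' + ?G' + ?H)) <= _ =>
    replace (P + G + H - (P' + G' + H)) with ((P - P') + (G - G')) by ring end.
  eapply Rle_trans; [apply Rabs_triang|].
  assert (Rabs (sumR (map (fun ij => S (Some (letter (u1 ++ c :: u2) (fst ij)))
                                        (Some (letter y (snd ij)))) pi)
              - sumR (map (fun ij => S (Some (letter (u1 ++ c' :: u2) (fst ij)))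
                                        (Some (letter y (snd ij)))) pi)) <= 2 * Smax K S).
  { apply (letter_sum_change K u1 u2 c c' K_pos u1_valid u2_valid c_letter c'_letter pi fst
             (fun ij e => S (Some e) (Some (letter y (snd ij))))); [lra|auto|].
    intros; apply S_diff_bound; simpl; auto; apply letter_valid; auto. }
  assert (Rabs (sumR (map (fun j => if memb j (map fst pi) then 0
                                    else S (Some (letter (u1 ++ c :: u2) j)) None)
                          (seq 1 (length (u1 ++ c :: u2))))
              - sumR (map (fun j => if memb j (map fst pi) then 0
                                    else S (Some (letter (u1 ++ c' :: u2) j)) None)
                          (seq 1 (length (u1 ++ c :: u2))))) <= 2 * Smax K S).
  { apply (letter_sum_change K u1 u2 c c' K_pos u1_valid u2_valid c_letter c'_letter _
             (fun j => j) (fun j e => if memb j (map fst pi) then 0 else S (Some e) None));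
      [lra|apply all_positions_nodup|].
    intros j e e' He He'; apply (gap_term_change _ (fun u => S u None)); auto.
    intros; apply S_bound; simpl; auto. }
  lra.
Qed.

Lemma align_score_change_y x pi : validw K x ->
  NoDup (map (fun ij => snd ij - 1)%nat pi) ->
  Rabs (align_score S x (u1 ++ c :: u2) pi - align_score S x (u1 ++ c' :: u2) pi)
    <= 4 * Smax K S.
Proof.
  intros Hx Hn; pose proof (Smax_nonneg K S); unfold align_score.
  rewrite (length_change u1 u2 c' c).
  match goal with |- Rabs (?P + ?G + ?H - (?P' + ?G + ?H')) <= _ =>
    replace (P + G + H - (P' + G + H')) with ((P - P') + (H - H')) by ring end.
  eapply Rle_trans; [apply Rabs_triang|].
  assert (Rabs (sumR (map (fun ij => S (Some (letter x (fst ij)))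
                                        (Some (letter (u1 ++ c :: u2) (snd ij)))) pi)
              - sumR (map (fun ij => S (Some (letter x (fst ij)))
                                        (Some (letter (u1 ++ c' :: u2) (snd ij)))) pi))
            <= 2 * Smax K S).
  { apply (letter_sum_change K u1 u2 c c' K_pos u1_valid u2_valid c_letter c'_letter pi snd
             (fun ij e => S (Some (letter x (fst ij))) (Some e))); [lra|auto|].
    intros; apply S_diff_bound; simpl; auto; apply letter_valid; auto. }
  assert (Rabs (sumR (map (fun j => if memb j (map snd pi) then 0
                                    else S None (Some (letter (u1 ++ c :: u2) j)))
                          (seq 1 (length (u1 ++ c :: u2))))
              - sumR (map (fun j => if memb j (map snd pi) then 0
                                    else S None (Some (letter (u1 ++ c' :: u2) j)))
                          (seq 1 (length (u1 ++ c :: u2))))) <= 2 * Smax K S).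
  { apply (letter_sum_change K u1 u2 c c' K_pos u1_valid u2_valid c_letter c'_letter _
             (fun j => j) (fun j e => if memb j (map snd pi) then 0 else S None (Some e)));
      [lra|apply all_positions_nodup|].
    intros j e e' He He'; apply (gap_term_change _ (fun u => S None u)); auto.
    intros; apply S_bound; simpl; auto. }
  lra.
Qed.

End ScoreChange.

Lemma Rmax_change a a' b b' d : Rabs (a - a') <= d -> Rabs (b - b') <= d ->
  Rabs (Rmax a b - Rmax a' b') <= d.
Proof.
  rewrite !Rabs_le_iff; intros H1 H2.
  unfold Rmax; destruct (Rle_dec a b), (Rle_dec a' b'); lra.
Qed.

Lemma fold_max_change {X} (l : list X) f g bf bg d : Rabs (bf - bg) <= d ->
  (forall z, In z l -> Rabs (f z - g z) <= d) ->
  Rabs (fold_right (fun z r => Rmax (f z) r) bf l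
        - fold_right (fun z r => Rmax (g z) r) bg l) <= d.
Proof.
  induction l as [|z l IH]; simpl; intros H1 H2; auto.
  apply Rmax_change; auto.
Qed.

Section OptimalScoreChange.
Variables (K : nat) (S : option nat -> option nat -> R).
Hypothesis K_pos : (0 < K)%nat.
Variables (u1 u2 : list nat) (c c' : nat).
Hypotheses (u1_valid : validw K u1) (u2_valid : validw K u2).
Hypotheses (c_letter : (c < K)%nat) (c'_letter : (c' < K)%nat).

Lemma LS_change_x y : validw K y ->
  Rabs (LS S (u1 ++ c :: u2) y - LS S (u1 ++ c' :: u2) y) <= 4 * Smax K S.
Proof.
  intros Hy; unfold LS; rewrite (length_change u1 u2 c' c).
  apply fold_max_change; [apply align_score_change_x; auto; constructor|].
  intros pi Hpi; apply align_score_change_x; auto.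
  apply (alignment_positions_nodup _ _ _ Hpi).
Qed.

Lemma LS_change_y x : validw K x ->
  Rabs (LS S x (u1 ++ c :: u2) - LS S x (u1 ++ c' :: u2)) <= 4 * Smax K S.
Proof.
  intros Hx; unfold LS; rewrite (length_change u1 u2 c' c).
  apply fold_max_change; [apply align_score_change_y; auto; constructor|].
  intros pi Hpi; apply align_score_change_y; auto.
  apply (alignment_positions_nodup _ _ _ Hpi).
Qed.

End OptimalScoreChange.

Definition L2 (S : option nat -> option nat -> R) (n : nat) (w : list nat) : R :=
  LS S (firstn n w) (skipn n w).

Lemma validw_split K n w : validw K w -> validw K (firstn n w) /\ validw K (skipn n w).
Proof.
  intros H; unfold validw in *; rewrite <- (firstn_skipn n w) in H.
  apply Forall_app in H; auto.
Qed.

Lemma L2_bounded_differences K S n : (0 < K)%nat ->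
  bounded_differences K (L2 S n) (4 * Smax K S).
Proof.
  intros HK w1 w2 c c' H1 H2 Hc Hc'; unfold L2.
  destruct (validw_split K n w1 H1) as [F1 S1].
  rewrite !firstn_app, !skipn_app; simpl length.
  destruct (n - length w1)%nat as [|k] eqn:E; simpl firstn; simpl skipn.
  - (* the changed letter lies in the second word *)
    apply LS_change_y; auto; unfold validw; rewrite app_nil_r; auto.
  - destruct (validw_split K k w2 H2) as [F2 S2].
    apply LS_change_x; auto; unfold validw; apply Forall_app; auto.
Qed.

Lemma count_times_gain S a b n w : length w = (n + n)%nat ->
  INR (cnt a w) * cond_gain S a b (firstn n w) (skipn n w) =
  sumR (map (fun k => L2 S n (replace_occ a b k w) - L2 S n w) (seq 0 (cnt a w))).
Proof.
  intros Hl; unfold cond_gain, count_a.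
  rewrite firstn_skipn, length_firstn, Nat.min_l by lia; fold (cnt a w); unfold L2.
  destruct (cnt a w) as [|m]; [simpl; lra|].
  cbv zeta; field; apply not_0_INR; lia.
Qed.

Lemma tail_vanishes alpha eta : 0 < alpha -> 0 < eta ->
  exists N, forall n, (N <= n)%nat -> Rpower (INR n) (- (alpha * ln (INR n))) <= eta.
Proof.
  intros Ha He.
  set (M := Rmax 1 (- ln eta / alpha)).
  assert (HM1 : 1 <= M) by apply Rmax_l.
  assert (HM2 : - ln eta <= alpha * M).
  { pose proof (Rmax_r 1 (- ln eta / alpha)) as H; fold M in H.
    apply (Rmult_le_compat_l alpha) in H; [|lra].
    replace (alpha * (- ln eta / alpha)) with (- ln eta) in H by (field; lra); lra. }
  destruct (archimed (exp M)) as [Hup _].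
  assert (Hpos : (0 < up (exp M))%Z) by (apply lt_IZR; pose proof (exp_pos M); simpl; lra).
  exists (Z.to_nat (up (exp M))); intros n Hn.
  apply le_INR in Hn; rewrite INR_IZR_INZ, Z2Nat.id in Hn by lia.
  assert (HL : M < ln (INR n)).
  { rewrite <- (ln_exp M) at 1; apply ln_increasing; [apply exp_pos|lra]. }
  unfold Rpower; rewrite <- (exp_ln eta He); apply Rlt_le, exp_increasing.
  set (L := ln (INR n)) in *.
  assert (alpha * L * 1 <= alpha * L * L) by (apply Rmult_le_compat_l; nra).
  assert (alpha * M < alpha * L) by (apply Rmult_lt_compat_l; lra).
  nra.
Qed.

(** * The variance bounds *)

(* Lower bound on a variance through a test function D:
   0 <= E[(F - E F + t D)^2] for every t. *)
Lemma variance_ge_correlation K p n F D t :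
  (forall c, (c < K)%nat -> 0 <= p c) ->
  - 2 * t * Ew K p n (fun w => D w * (F w - Ew K p n F)) - t^2 * Ew K p n (fun w => D w ^ 2)
  <= Ew K p n (fun w => (F w - Ew K p n F)^2).
Proof.
  intros Hp; set (m := Ew K p n F).
  assert (Hsq : 0 <= Ew K p n (fun w => (F w - m + t * D w)^2)).
  { unfold Ew; rewrite <- (Rmult_0_l (wsum (words K n) (weight p) (fun _ => 1))).
    rewrite <- wsum_const; apply (Ew_mono K p Hp); intros; apply pow2_ge_0. }
  rewrite (Ew_ext K p n _ (fun w => (F w - m)^2 + (2 * t) * (D w * (F w - m)) + t^2 * (D w ^ 2)))
    in Hsq by (intros; ring).
  rewrite !Ew_plus, !Ew_scal in Hsq; lra.
Qed.

Definition gain (S : option nat -> option nat -> R) (a b n : nat) (w : list nat) : R :=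
  cond_gain S a b (firstn n w) (skipn n w).

Lemma var_L_as_Ew K p S n :
  var_L K p S n = Ew K p (n + n) (fun w => (L2 S n w - Ew K p (n + n) (L2 S n))^2).
Proof. unfold var_L, L2; rewrite !Exp_as_Ew; reflexivity. Qed.

(* Upper bound: 2n letters, each moving the score by at most 4 max|S|. *)
Lemma var_L_upper K p S n : (forall c, (c < K)%nat -> 0 <= p c) ->
  sumR (map p (seq 0 K)) = 1 -> (0 < K)%nat ->
  var_L K p S n <= INR (n + n) * (4 * Smax K S)^2.
Proof.
  intros Hp Hs HK; rewrite var_L_as_Ew.
  apply variance_bounded_differences, L2_bounded_differences; auto.
Qed.

Section VarianceLowerBound.
Variables (K : nat) (p : nat -> R) (S : option nat -> option nat -> R) (a b n : nat).
Hypothesis p_nonneg : forall c, (c < K)%nat -> 0 <= p c.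
Hypothesis p_sum : sumR (map p (seq 0 K)) = 1.
Hypotheses (a_letter : (a < K)%nat) (b_letter : (b < K)%nat).

Let d := 4 * Smax K S.
Let N := (n + n)%nat.

(* A replacement of a by b loses at most d, so N_a G >= - d N_a. *)
Lemma count_times_gain_lower w : validw K w -> length w = N ->
  - d * INR (cnt a w) <= INR (cnt a w) * gain S a b n w.
Proof.
  intros Hw Hl; unfold gain; rewrite count_times_gain by auto.
  apply Rle_trans with (sumR (map (fun _ => - d) (seq 0 (cnt a w))));
    [rewrite sumR_const, length_seq; lra|].
  apply sumR_mono; intros k Hk; apply in_seq in Hk.
  destruct (replace_occ_split a b w k ltac:(lia)) as [w1 [w2 [E1 E2]]].
  rewrite E2, E1; rewrite E1 in Hw; apply Forall_app in Hw as [Hw1 Hw2].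
  inversion Hw2; subst.
  pose proof (L2_bounded_differences K S n ltac:(lia) w1 w2 b a Hw1 ltac:(assumption)
                b_letter a_letter)
    as X; apply Rabs_le_iff in X; fold d in X; lra.
Qed.

Lemma weighted_gain_lower Delta : 0 < Delta -> 0 <= d ->
  1 - prob_gain_ge K p S a b n Delta <= p a * Delta / (2 * (Delta + d)) ->
  INR N * p a * Delta / 2 <= Ew K p N (fun w => INR (cnt a w) * gain S a b n w).
Proof.
  intros HDelta Hd Hprob.
  set (I := fun w => if Rle_dec Delta (gain S a b n w) then 1 else 0).
  assert (HP : prob_gain_ge K p S a b n Delta = Ew K p N I)
    by (unfold prob_gain_ge; rewrite Exp_as_Ew; reflexivity).
  (* pointwise: N_a G >= Delta N_a, and N_a G >= -(Delta + d) N off the good event *)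
  assert (Hpoint : forall w, validw K w -> length w = N ->
    Delta * INR (cnt a w) + (- (Delta + d) * INR N) * 1 + ((Delta + d) * INR N) * I w
    <= INR (cnt a w) * gain S a b n w).
  { intros w Hw Hl; pose proof (pos_INR (cnt a w)).
    assert (INR (cnt a w) <= INR N) by (rewrite <- Hl; apply le_INR, cnt_le).
    unfold I; destruct (Rle_dec Delta (gain S a b n w)).
    - assert (Delta * INR (cnt a w) <= gain S a b n w * INR (cnt a w))
        by (apply Rmult_le_compat_r; auto); lra.
    - pose proof (count_times_gain_lower w Hw Hl).
      assert (d * INR (cnt a w) <= d * INR N) by (apply Rmult_le_compat_l; auto).
      assert (Delta * INR (cnt a w) <= Delta * INR N) by (apply Rmult_le_compat_l; lra).
      lra. }
  pose proof (Ew_mono K p p_nonneg N _ _ Hpoint) as Hmean.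
  rewrite !Ew_plus, !Ew_scal, Ew_one, Ew_count, <- HP in Hmean by auto.
  assert ((Delta + d) * INR N * (1 - prob_gain_ge K p S a b n Delta)
          <= (Delta + d) * INR N * (p a * Delta / (2 * (Delta + d))))
    by (apply Rmult_le_compat_l; auto; apply Rmult_le_pos; [lra|apply pos_INR]).
  assert ((Delta + d) * INR N * (p a * Delta / (2 * (Delta + d))) = INR N * p a * Delta / 2)
    by (field; lra).
  lra.
Qed.

Hypothesis pb_pos : 0 < p b.

Definition balance (w : list nat) : R := INR (cnt a w) - (p a / p b) * INR (cnt b w).

Lemma balance_centred : Ew K p N balance = 0.
Proof. unfold balance; rewrite Ew_minus, Ew_scal, !Ew_count by auto; field; lra. Qed.

Lemma balance_second_moment : Ew K p N (fun w => balance w ^ 2) <= INR N * (1 + p a / p b)^2.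
Proof.
  assert (Hs : 0 <= p a / p b) by 
    (apply Rmult_le_pos; [apply p_nonneg; auto|apply Rlt_le, Rinv_0_lt_compat; auto]).
  rewrite (Ew_ext K p N _ (fun w => (balance w - Ew K p N balance)^2))
    by (intros; rewrite balance_centred; ring).
  apply variance_bounded_differences; [auto|auto|lia|].
  intros w1 w2 c c' _ _ _ _; unfold balance; rewrite !cnt_app, !cnt_cons_R.
  apply Rabs_le_iff.
  destruct (Nat.eqb c a), (Nat.eqb c' a), (Nat.eqb c b), (Nat.eqb c' b); split; nra.
Qed.

(* By the exchange identity, Cov(D, L) = - E[N_a G]. *)
Lemma balance_covariance :
  Ew K p N (fun w => balance w * (L2 S n w - Ew K p N (L2 S n)))
  = - Ew K p N (fun w => INR (cnt a w) * gain S a b n w).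
Proof.
  set (m := Ew K p N (L2 S n)).
  rewrite (Ew_ext K p N _ (fun w => INR (cnt a w) * L2 S n w
            - (p a / p b) * (INR (cnt b w) * L2 S n w) - m * balance w))
    by (intros; unfold balance; ring).
  rewrite !Ew_minus, !Ew_scal, balance_centred.
  rewrite <- (Ew_replace_exchange K p p_sum a b a_letter b_letter pb_pos N (L2 S n)).
  rewrite (Ew_ext K p N (fun w => INR (cnt a w) * gain S a b n w)
    (fun w => sumR (map (fun k => L2 S n (replace_occ a b k w)) (seq 0 (cnt a w)))
              - INR (cnt a w) * L2 S n w)).
  - rewrite Ew_minus; ring.
  - intros w _ Hl; unfold gain; rewrite count_times_gain by auto.
    rewrite sumR_minus, sumR_const, length_seq; reflexivity.
Qed.

Lemma var_L_lower Delta : 0 < Delta -> 0 < p a ->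
  1 - prob_gain_ge K p S a b n Delta <= p a * Delta / (2 * (Delta + d)) ->
  p a ^ 2 * Delta ^ 2 / (2 * (1 + p a / p b) ^ 2) * INR n <= var_L K p S n.
Proof.
  intros HDelta Hpa Hprob.
  assert (Hd : 0 <= d) by (unfold d; pose proof (Smax_nonneg K S); lra).
  set (e := 1 + p a / p b).
  assert (He : 0 < e) by (unfold e; assert (0 < p a / p b) by (apply Rdiv_lt_0_compat; auto); lra).
  set (t := p a * Delta / (2 * e ^ 2)).
  pose proof (weighted_gain_lower Delta HDelta Hd Hprob) as HX.
  pose proof balance_second_moment as HY; fold e in HY.
  pose proof (variance_ge_correlation K p N (L2 S n) balance t p_nonneg) as Hq.
  rewrite balance_covariance in Hq; unfold N in Hq; rewrite <- var_L_as_Ew in Hq; fold N in Hq.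
  set (X := Ew K p N (fun w => INR (cnt a w) * gain S a b n w)) in *.
  set (Y := Ew K p N (fun w => balance w ^ 2)) in *.
  assert (Ht : 0 < t)
    by (unfold t; apply Rdiv_lt_0_compat; [nra|apply Rmult_lt_0_compat; [lra|apply pow_lt; lra]]).
  assert (HN : INR N = 2 * INR n) by (unfold N; rewrite plus_INR; ring).
  assert (t^2 * Y <= t^2 * (INR N * e^2)) by (apply Rmult_le_compat_l; [apply pow2_ge_0|auto]).
  assert (2 * t * (INR N * p a * Delta / 2) <= 2 * t * X) by (apply Rmult_le_compat_l; lra).
  assert (p a ^ 2 * Delta ^ 2 / (2 * e ^ 2) * INR n
          = 2 * t * (INR N * p a * Delta / 2) - t^2 * (INR N * e^2))
    by (rewrite HN; unfold t; field; lra).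
  lra.
Qed.

End VarianceLowerBound.

Theorem mainTheorem2
  (K : nat) (p : nat -> R) (S : option nat -> option nat -> R) (a b : nat)
  (Hp_nonneg : forall c, (c < K)%nat -> 0 <= p c)
  (Hp_sum : sumR (map p (seq 0 K)) = 1)
  (HS_sym : forall u v, valid_letter K u -> valid_letter K v -> S u v = S v u)
  (Ha : (a < K)%nat) (Hb : (b < K)%nat) (Hab : a <> b)
  (Hpa : 0 < p a) (Hpb : 0 < p b)
  (Hgain : exists Delta alpha N0, 0 < Delta /\ 0 < alpha /\
     forall n : nat, (N0 <= n)%nat ->
       prob_gain_ge K p S a b n Delta
         >= 1 - Rpower (INR n) (- (alpha * ln (INR n)))) :
  exists c C N1, 0 < c /\ c <= C /\
    forall n : nat, (N1 <= n)%nat ->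
      c * INR n <= var_L K p S n <= C * INR n.
Proof.
  destruct Hgain as [Delta [alpha [N0 [HDelta [Halpha Hprob]]]]].
  set (d := 4 * Smax K S).
  assert (Hd : 0 <= d) by (unfold d; pose proof (Smax_nonneg K S); lra).
  set (eta := p a * Delta / (2 * (Delta + d))).
  assert (Heta : 0 < eta) by (unfold eta; apply Rdiv_lt_0_compat; nra).
  destruct (tail_vanishes alpha eta Halpha Heta) as [N2 HN2].
  set (c := p a ^ 2 * Delta ^ 2 / (2 * (1 + p a / p b) ^ 2)).
  assert (Hc : 0 < c).
  { assert (0 < p a / p b) by (apply Rdiv_lt_0_compat; auto).
    unfold c; apply Rdiv_lt_0_compat; [|apply Rmult_lt_0_compat; [lra|apply pow_lt; lra]].
    apply Rmult_lt_0_compat; apply pow_lt; auto. }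
  exists c, (c + 2 * d ^ 2), (Nat.max N0 N2).
  split; [auto|split; [pose proof (pow2_ge_0 d); lra|]].
  intros n Hn; split.
  - apply (var_L_lower K p S a b n Hp_nonneg Hp_sum Ha Hb Hpb Delta HDelta Hpa).
    pose proof (Hprob n ltac:(lia)); pose proof (HN2 n ltac:(lia)); fold d eta; lra.
  - pose proof (var_L_upper K p S n Hp_nonneg Hp_sum ltac:(lia)) as Hup.
    rewrite plus_INR in Hup; fold d in Hup; pose proof (pos_INR n).
    assert (0 <= c * INR n) by (apply Rmult_le_pos; lra); nra.
Qed.
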